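(* Let $f$ be an almost distance function on a bi-complete connected Finsler manifold $M$ and let $p\in f^{-1}(\inf f,\sup f)$. Then there exist a neighborhood $V_p$ of $p$ and $\delta(p)>0$ such that, with $a_0:=f(p)-\tfrac12\delta(p)$ and $b_0:=f(p)+\tfrac12\delta(p)$, every $q\in V_p$ admits an $f$-geodesic $\gamma:[0,\delta(p)]\to M$ with either $\gamma(0)=q$ and $\gamma$ meeting ${}^{b_0}M_f$, or $\gamma(\delta(p))=q$ and $\gamma$ meeting $M_f^{a_0}$. In particular, for each $q\in V_p$, either $d(M_f^{a_0},q)=f(q)-a_0$ or $d(q,{}^{b_0}M_f)=b_0-f(q)$.
   Context: $(M,F)$ is a connected Finsler manifold with (possibly asymmetric) distance $d$; bi-complete means all forward Cauchy ($d(x_i,x_j)\to0$, $i<j$) and backward Cauchy ($d(x_j,x_i)\to0$, $i<j$) sequences converge. $f$ is 1-Lipschitz if $f(y)-f(x)\le d(x,y)$. An $f$-geodesic is a unit speed nonconstant geodesic $\gamma:I\to M$ with $f(\gamma(t))-f(\gamma(s))=t-s$. An almost distance function is a 1-Lipschitz $f$ such that for each $p\in f^{-1}(\inf f,\sup f)$ there are a neighborhood $U_p$ and $\delta(p)>0$ such that every $q\in U_p$ admits an $f$-geodesic $\gamma_q:[0,\delta(p)]\to M$ with $\gamma_q(0)=q$ or $\gamma_q(\delta(p))=q$. $M_f^a:=f^{-1}(-\infty,a]$, ${}^bM_f:=f^{-1}[b,\infty)$, $d(A,q):=\inf_{x\in A}d(x,q)$, $d(q,A):=\inf_{x\in A}d(q,x)$.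 *)

From Stdlib Require Import Reals Lra Classical.
Open Scope R_scope.

(* Abstract model of the metric structure of a Finsler manifold:
   a (possibly asymmetric) distance d satisfying the quasi-metric axioms,
   whose forward and backward balls generate the same topology
   (true for Finsler manifolds, where this topology is the manifold topology). *)
Record FinslerSpace := {
  pt :> Type;
  dist : pt -> pt -> R;
  dist_refl : forall x, dist x x = 0;
  dist_nonneg : forall x y, 0 <= dist x y;
  dist_sep : forall x y, dist x y = 0 -> x = y;
  dist_tri : forall x y z, dist x z <= dist x y + dist y z;
  fwd_bwd : forall x eps, 0 < eps -> exists del, 0 < del /\
              forall y, dist x y < del -> dist y x < eps;
  bwd_fwd : forall x eps, 0 < eps -> exists del, 0 < del /\
              forall y, dist y x < del -> dist x y < eps
}.

Section Defs.
Variable M : FinslerSpace.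
Notation d := (dist M).

Definition is_open (U : M -> Prop) : Prop :=
  forall x, U x -> exists r, 0 < r /\ forall y, d x y < r -> U y.

Definition is_nbhd (U : M -> Prop) (p : M) : Prop :=
  exists r, 0 < r /\ forall y, d p y < r -> U y.

Definition connected : Prop :=
  forall U V : M -> Prop, is_open U -> is_open V ->
    (forall x, U x \/ V x) -> (forall x, ~ (U x /\ V x)) ->
    (forall x, U x) \/ (forall x, V x).

Definition forward_cauchy (u : nat -> M) : Prop :=
  forall eps, 0 < eps -> exists N, forall i j, (N <= i)%nat -> (i < j)%nat ->
    d (u i) (u j) < eps.
Definition backward_cauchy (u : nat -> M) : Prop :=
  forall eps, 0 < eps -> exists N, forall i j, (N <= i)%nat -> (i < j)%nat ->
    d (u j) (u i) < eps.
Definition converges (u : nat -> M) (x : M) : Prop :=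
  forall eps, 0 < eps -> exists N, forall i, (N <= i)%nat -> d x (u i) < eps.

Definition bi_complete : Prop :=
  (forall u, forward_cauchy u -> exists x, converges u x) /\
  (forall u, backward_cauchy u -> exists x, converges u x).

Definition lipschitz1 (f : M -> R) : Prop :=
  forall x y, f y - f x <= d x y.

(* Given f 1-Lipschitz, a unit speed
   geodesic with f(g t)-f(g s)=t-s is exactly a curve with
   d(g s, g t) = t - s (distance realizing, arclength parametrized)
   and f(g t) - f(g s) = t - s. *)
Definition f_geodesic (f : M -> R) (g : R -> M) (delta : R) : Prop :=
  0 < delta /\
  forall s t, 0 <= s -> s <= t -> t <= delta ->
    d (g s) (g t) = t - s /\ f (g t) - f (g s) = t - s.

Definition in_open_range (f : M -> R) (p : M) : Prop :=
  (exists x, f x < f p) /\ (exists y, f p < f y).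

Definition almost_distance (f : M -> R) : Prop :=
  lipschitz1 f /\
  forall p, in_open_range f p ->
    exists (U : M -> Prop) (delta : R), is_nbhd U p /\ 0 < delta /\
      forall q, U q -> exists g, f_geodesic f g delta /\ (g 0 = q \/ g delta = q).

Definition is_inf (E : R -> Prop) (m : R) : Prop :=
  (forall r, E r -> m <= r) /\ (forall m', (forall r, E r -> m' <= r) -> m' <= m).

Definition dist_sub_to (f : M -> R) (a : R) (q : M) (v : R) : Prop :=
  is_inf (fun r => exists x, f x <= a /\ r = d x q) v.
Definition dist_to_super (f : M -> R) (b : R) (q : M) (v : R) : Prop :=
  is_inf (fun r => exists x, b <= f x /\ r = d q x) v.

End Defs.

(* Shrink the neighbourhood U_p of the definition of an almost distance function so
   that |f q - f p| <= delta/2 on it.  The levels a0 and b0 then lie within delta of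
   f q, so the f-geodesic of length delta issued from (resp. ending at) q crosses the
   level b0 (resp. a0); its initial (resp. final) segment up to that level realises the
   distance, while the 1-Lipschitz property of f gives the matching lower bound. *)
From Pilot Require Import Defs.
From Stdlib Require Import Reals Lra.
Open Scope R_scope.

Section AlmostDistance.

Variable M : FinslerSpace.
Notation d := (Defs.dist M).
Variable f : M -> R.
Hypothesis f_lip : lipschitz1 M f.

Lemma is_nbhd_and (U V : M -> Prop) (p : M) :
  is_nbhd M U p -> is_nbhd M V p -> is_nbhd M (fun q => U q /\ V q) p.
Proof.
  intros [r [Hr HU]] [s [Hs HV]].
  exists (Rmin r s); split; [now apply Rmin_pos|].
  intros y Hy; split.
  - apply HU; eapply Rlt_le_trans; [exact Hy | apply Rmin_l].
  - apply HV; eapply Rlt_le_trans; [exact Hy | apply Rmin_r].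
Qed.

(* Forward balls only control f from above; the lower bound needs [fwd_bwd]. *)
Lemma is_nbhd_level_band (p : M) (eps : R) :
  0 < eps -> is_nbhd M (fun q => f p - eps <= f q <= f p + eps) p.
Proof.
  intros Heps.
  destruct (fwd_bwd M p eps Heps) as [del [Hdel Hback]].
  exists (Rmin del eps); split; [now apply Rmin_pos|].
  intros q Hq.
  assert (Hq_del : d p q < del) by (eapply Rlt_le_trans; [exact Hq | apply Rmin_l]).
  assert (Hq_eps : d p q < eps) by (eapply Rlt_le_trans; [exact Hq | apply Rmin_r]).
  pose proof (Hback q Hq_del); pose proof (f_lip p q); pose proof (f_lip q p).
  lra.
Qed.

Lemma f_geodesic_f_end (g : R -> M) (delta : R) :
  f_geodesic M f g delta -> f (g delta) = f (g 0) + delta.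
Proof.
  intros [Hd Hg]; destruct (Hg 0 delta) as [_ Hf]; lra.
Qed.

Lemma dist_to_super_geodesic_start (g : R -> M) (delta b : R) :
  f_geodesic M f g delta -> f (g 0) <= b <= f (g 0) + delta ->
  dist_to_super M f b (g 0) (b - f (g 0)).
Proof.
  intros [_ Hg] Hb; split.
  - intros r [x [Hx ->]]; pose proof (f_lip (g 0) x); lra.
  - intros m Hm.
    set (t := b - f (g 0)).
    destruct (Hg 0 t) as [Hdt Hft]; unfold t; try lra.
    apply Hm; exists (g t); split; [unfold t in *; lra | rewrite Hdt; unfold t; ring].
Qed.

Lemma dist_sub_to_geodesic_end (g : R -> M) (delta a : R) :
  f_geodesic M f g delta -> f (g delta) - delta <= a <= f (g delta) ->
  dist_sub_to M f a (g delta) (f (g delta) - a).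
Proof.
  intros [Hd Hg] Ha; split.
  - intros r [x [Hx ->]]; pose proof (f_lip x (g delta)); lra.
  - intros m Hm.
    set (s := delta - (f (g delta) - a)).
    destruct (Hg s delta) as [Hds Hfs]; unfold s; try lra.
    replace (f (g delta) - a) with (delta - s) by (unfold s; ring).
    apply Hm; exists (g s); split; [unfold s in *; lra | now rewrite Hds].
Qed.

End AlmostDistance.

Theorem lemma5 (M : FinslerSpace) (f : M -> R) (p : M) :
  connected M -> bi_complete M -> almost_distance M f -> in_open_range M f p ->
  exists (V : M -> Prop) (delta : R),
    is_nbhd M V p /\ 0 < delta /\
    let a0 := f p - delta / 2 in
    let b0 := f p + delta / 2 in
    (forall q, V q ->
       exists g, f_geodesic M f g delta /\
         ((g 0 = q /\ exists t, 0 <= t <= delta /\ b0 <= f (g t)) \/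
          (g delta = q /\ exists t, 0 <= t <= delta /\ f (g t) <= a0))) /\
    (forall q, V q ->
       dist_sub_to M f a0 q (f q - a0) \/ dist_to_super M f b0 q (b0 - f q)).
Proof.
  intros _ _ [f_lip Hgeod] Hp.
  destruct (Hgeod p Hp) as [U [delta [HU [Hdelta HUgeod]]]].
  exists (fun q => U q /\ f p - delta / 2 <= f q <= f p + delta / 2), delta.
  split; [apply is_nbhd_and; [exact HU | apply (is_nbhd_level_band M f f_lip); lra]|].
  split; [exact Hdelta|]; cbv zeta.
  split; intros q [HUq Hfq];
    destruct (HUgeod q HUq) as [g [Hg [<- | <-]]];
    pose proof (f_geodesic_f_end M f g delta Hg).
  - exists g; split; [exact Hg|].
    left; split; [reflexivity|]; exists delta; lra.
  - exists g; split; [exact Hg|].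
    right; split; [reflexivity|]; exists 0; lra.
  - right; apply (dist_to_super_geodesic_start M f f_lip g delta); [exact Hg | lra].
  - left; apply (dist_sub_to_geodesic_end M f f_lip g delta); [exact Hg | lra].
Qed.
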